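(* Let $\Theta\subseteq\mathbb{R}^p$ be open and $\theta\mapsto|\psi_\theta\rangle$ a differentiable family of unit vectors in $\mathbb{C}^d$, with $\rho_\theta=|\psi_\theta\rangle\langle\psi_\theta|$, and let $\theta_0\in\Theta$. Then equality in the quantum Cramér–Rao inequality is attainable at $\theta_0$ (equivalently, Matsumoto's condition $\mathrm{Im}\langle l_j(\theta_0)|l_k(\theta_0)\rangle=0$ for all $j,k$ holds) if and only if $\mathrm{Im}\langle\psi^{(j)}_{\theta_0}|\psi^{(k)}_{\theta_0}\rangle=0$ for all $j,k$, where $|\psi^{(j)}_\theta\rangle=\partial|\psi_\theta\rangle/\partial\theta^j$.
   Context: For $j=1,\dots,p$ let $\lambda^j_\theta$ be a Hermitian solution of $\frac{\partial\rho_\theta}{\partial\theta^j}=\frac12(\rho_\theta\lambda^j_\theta+\lambda^j_\theta\rho_\theta)$ (symmetric logarithmic derivative), and $|l_j(\theta)\rangle=\lambda^j_\theta|\psi_\theta\rangle$ (independent of the choice of $\lambda^j_\theta$). The SLD quantum information is the matrix $(H_\theta)_{jk}=\mathrm{Re}\,\mathrm{tr}\{\lambda^j_\theta\rho_\theta\lambda^k_\theta\}$. The quantum Cramér–Rao inequality states that for a POVM with unbiased estimator $\hat\theta$, $E[(\hat\theta-\theta)(\hat\theta-\theta)^T]\ge H_\theta^{-1}$; by a theorem of Matsumoto, for pure-state families there exist a POVM and estimator achieving equality at $\theta_0$ if and only if $\mathrm{Im}\langle l_j(\theta_0)|l_k(\theta_0)\rangle=0$ for all $j,k$. *)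

From HB Require Import structures.
From mathcomp Require Import all_boot all_order all_algebra.
From mathcomp Require Import all_classical all_reals all_analysis.
From mathcomp Require Import complex.
Set Implicit Arguments. Unset Strict Implicit. Unset Printing Implicit Defensive.
Import Order.TTheory GRing.Theory Num.Theory.
Import numFieldNormedType.Exports.
Local Open Scope ring_scope.

Definition dagger (R : rcfType) m n (A : 'M[R[i]]_(m, n)) : 'M[R[i]]_(n, m) :=
  map_mx (@conjc R) A^T.

Definition braket (R : rcfType) d (u v : 'cV[R[i]]_d) : R[i] :=
  (dagger u *m v) 0 0.

Definition hermitian_mx (R : rcfType) d (A : 'M[R[i]]_d) : Prop := dagger A = A.

Definition ketbra (R : rcfType) d (u : 'cV[R[i]]_d) : 'M[R[i]]_d :=
  u *m dagger u.

Definition cmx_differentiable (R : realType) p m n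
    (F : 'rV[R]_p -> 'M[R[i]]_(m, n)) (x : 'rV[R]_p) : Prop :=
  forall a b, differentiable (fun y => complex.Re (F y a b)) x /\
              differentiable (fun y => complex.Im (F y a b)) x.

Definition cmx_partial (R : realType) p m n
    (F : 'rV[R]_p -> 'M[R[i]]_(m, n)) (j : 'I_p) (x : 'rV[R]_p)
    : 'M[R[i]]_(m, n) :=
  \matrix_(a, b) Complex ('D_(delta_mx 0 j) (fun y => complex.Re (F y a b)) x)
                         ('D_(delta_mx 0 j) (fun y => complex.Im (F y a b)) x).

From HB Require Import structures.
From mathcomp Require Import all_boot all_order all_algebra.
From mathcomp Require Import all_classical all_reals all_analysis.
From mathcomp Require Import complex.
From mathcomp Require Import ring.
(* Differentiating [<psi|psi> = 1] shows that [<psi|d_j psi>] is purely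
   imaginary.  Applying the SLD equation [d_j rho = (rho L_j + L_j rho)/2] to
   [psi] and pairing with [psi] then gives [<psi|L_j psi> = 0], whence
   [L_j psi = 2 (d_j psi - <psi|d_j psi> psi)].  The corrections along [psi]
   only add real numbers to [<L_j psi|L_k psi>], so
   [Im <L_j psi|L_k psi> = 4 Im <d_j psi|d_k psi>]. *)

Set Implicit Arguments.
Unset Strict Implicit.
Unset Printing Implicit Defensive.

Import Order.TTheory GRing.Theory Num.Theory.
Import numFieldNormedType.Exports.
Local Open Scope ring_scope.

Local Notation Re := (@complex.Re _).
Local Notation Im := (@complex.Im _).

Section ComplexParts.
Variable R : rcfType.
Implicit Types x y : R[i].

Lemma complex_eq x y : Re x = Re y -> Im x = Im y -> x = y.
Proof. by case: x => ? ?; case: y => ? ? /= -> ->. Qed.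

Lemma ReM x y : Re (x * y) = Re x * Re y - Im x * Im y.
Proof. by case: x; case: y. Qed.

Lemma ImM x y : Im (x * y) = Re x * Im y + Im x * Re y.
Proof. by case: x; case: y. Qed.

Lemma ReJ x : Re x^*%C = Re x.
Proof. by case: x. Qed.

Lemma ImJ x : Im x^*%C = - Im x.
Proof. by case: x. Qed.

Lemma Im_mulr_nat n x : Im (n%:R * x) = n%:R * Im x.
Proof. by rewrite !mulr_natl raddfMn. Qed.

End ComplexParts.

Section Braket.
Variables (R : rcfType) (d : nat).
Implicit Types u v w : 'cV[R[i]]_d.

Lemma braketE u v : braket u v = \sum_a (u a 0)^*%C * v a 0.
Proof. by rewrite /braket !mxE; apply: eq_bigr => a _; rewrite !mxE. Qed.

Lemma braketC u v : braket v u = (braket u v)^*%C.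
Proof.
rewrite !braketE rmorph_sum; apply: eq_bigr => a _.
by rewrite rmorphM /= conjcK mulrC.
Qed.

Lemma braketZr u v (c : R[i]) : braket u (c *: v) = c * braket u v.
Proof.
by rewrite !braketE mulr_sumr; apply: eq_bigr => a _; rewrite !mxE mulrCA.
Qed.

Lemma braketDr u v w : braket u (v + w) = braket u v + braket u w.
Proof. by rewrite !braketE -big_split; apply: eq_bigr => a _; rewrite !mxE mulrDr. Qed.

Lemma braketZl u v (c : R[i]) : braket (c *: v) u = c^*%C * braket v u.
Proof. by rewrite braketC braketZr rmorphM /= -braketC. Qed.

Lemma braketDl u v w : braket (v + w) u = braket v u + braket w u.
Proof. by rewrite braketC braketDr rmorphD /= -!braketC. Qed.

Lemma mulmx_bra_ket (m : nat) (X : 'M[R[i]]_(m, 1)) v w :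
  X *m (dagger v *m w) = braket v w *: X.
Proof. by rewrite {1}[dagger v *m w]mx11_scalar mul_mx_scalar. Qed.

End Braket.

Section ComplexDerive.
Variables (R : realType) (V : normedModType R).
Implicit Types (f g : V -> R[i]) (x v : V).

Definition cderivable f x v :=
  derivable (Re \o f) x v /\ derivable (Im \o f) x v.

Definition cderive f v x : R[i] :=
  Complex ('D_v (Re \o f) x) ('D_v (Im \o f) x).

Let scalerE (a b : R) : a *: b = a * b. Proof. by []. Qed.

Lemma Re_compM f g : Re \o (fun y => f y * g y) =
  ((Re \o f) * (Re \o g) - (Im \o f) * (Im \o g))%R.
Proof. by apply/funext => y; rewrite /= ReM. Qed.

Lemma Im_compM f g : Im \o (fun y => f y * g y) =
  ((Re \o f) * (Im \o g) + (Im \o f) * (Re \o g))%R.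
Proof. by apply/funext => y; rewrite /= ImM. Qed.

Lemma cderivableM f g x v : cderivable f x v -> cderivable g x v ->
  cderivable (fun y => f y * g y) x v.
Proof.
move=> [dRf dIf] [dRg dIg]; rewrite /cderivable Re_compM Im_compM; split.
  exact: derivableB (derivableM dRf dRg) (derivableM dIf dIg).
exact: derivableD (derivableM dRf dIg) (derivableM dIf dRg).
Qed.

Lemma cderiveM f g x v : cderivable f x v -> cderivable g x v ->
  cderive (fun y => f y * g y) v x = cderive f v x * g x + f x * cderive g v x.
Proof.
move=> [dRf dIf] [dRg dIg]; rewrite /cderive Re_compM Im_compM.
rewrite (deriveB (derivableM dRf dRg) (derivableM dIf dIg)).
rewrite (deriveD (derivableM dRf dIg) (derivableM dIf dRg)).
rewrite (deriveM dRf dRg) (deriveM dIf dIg) (deriveM dRf dIg) (deriveM dIf dRg).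
rewrite /=; case: (f x) => a b; case: (g x) => c e.
by apply: complex_eq; rewrite /= !scalerE; ring.
Qed.

Lemma cderivable_conj f x v : cderivable f x v ->
  cderivable (fun y => (f y)^*%C) x v.
Proof.
move=> [dRf dIf]; split.
  by rewrite (_ : _ \o _ = Re \o f) //; apply/funext => y; rewrite /= ReJ.
rewrite (_ : _ \o _ = - (Im \o f))%R; first exact: derivableN.
by apply/funext => y; rewrite /= ImJ.
Qed.

Lemma cderive_conj f x v : cderivable f x v ->
  cderive (fun y => (f y)^*%C) v x = (cderive f v x)^*%C.
Proof.
move=> [_ dIf]; rewrite /cderive.
rewrite (_ : Re \o _ = Re \o f); last by apply/funext => y; rewrite /= ReJ.
rewrite (_ : Im \o _ = - (Im \o f))%R; last by apply/funext => y; rewrite /= ImJ.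
by rewrite deriveN.
Qed.

Lemma cderive_sum n (F : 'I_n -> V -> R[i]) x v :
  (forall a, cderivable (F a) x v) ->
  cderive (fun y => \sum_a F a y) v x = \sum_a cderive (F a) v x.
Proof.
move=> dF; rewrite /cderive.
have dRe a : derivable (Re \o F a) x v by case: (dF a).
have dIm a : derivable (Im \o F a) x v by case: (dF a).
rewrite (_ : Re \o _ = \sum_a (Re \o F a))%R; last first.
  by apply/funext => y; rewrite /= raddf_sum fct_sumE.
rewrite (_ : Im \o _ = \sum_a (Im \o F a))%R; last first.
  by apply/funext => y; rewrite /= raddf_sum fct_sumE.
rewrite (derive_sum dRe) (derive_sum dIm).
by apply: complex_eq; rewrite raddf_sum.
Qed.

Lemma cderive_near_cst f (c : R[i]) x v :
  (\forall y \near x, f y = c) -> cderive f v x = 0.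
Proof.
move=> fc; rewrite /cderive.
have nearE (h : R[i] -> R) : \forall y \near x, (h \o f) y = cst (h c) y.
  by apply: filterS fc => y fy; rewrite /comp fy.
by rewrite (near_eq_derive v (nearE Re)) (near_eq_derive v (nearE Im)) !derive_cst.
Qed.

End ComplexDerive.

Section StateDerivatives.
Variables (R : realType) (p d : nat).
Implicit Types (psi phi : 'rV[R]_p -> 'cV[R[i]]_d) (x : 'rV[R]_p).

Lemma cmx_partialE m n (F : 'rV[R]_p -> 'M[R[i]]_(m, n)) j x a b :
  cmx_partial F j x a b = cderive (fun y => F y a b) (delta_mx 0 j) x.
Proof. by rewrite mxE. Qed.

Lemma cmx_differentiable_cderivable m n (F : 'rV[R]_p -> 'M[R[i]]_(m, n)) x a b v :
  cmx_differentiable F x -> cderivable (fun y => F y a b) x v.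
Proof. by move=> /(_ a b) [dRe dIm]; split; apply: diff_derivable. Qed.

Lemma cmx_partial_ketbra psi j x : cmx_differentiable psi x ->
  cmx_partial (fun y => ketbra (psi y)) j x =
  cmx_partial psi j x *m dagger (psi x) + psi x *m dagger (cmx_partial psi j x).
Proof.
move=> dpsi; apply/matrixP => a b.
have dpsi_a c := cmx_differentiable_cderivable c 0 (delta_mx 0 j) dpsi.
rewrite cmx_partialE (_ : (fun y => _) = fun y => psi y a 0 * (psi y b 0)^*%C); last first.
  by apply/funext => y; rewrite !mxE big_ord1 !mxE.
rewrite cderiveM ?cderive_conj //; last exact: cderivable_conj.
by rewrite !mxE !big_ord1 !mxE.
Qed.

Lemma cderive_braket psi phi j x :
  cmx_differentiable psi x -> cmx_differentiable phi x ->
  cderive (fun y => braket (psi y) (phi y)) (delta_mx 0 j) x =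
  braket (cmx_partial psi j x) (phi x) + braket (psi x) (cmx_partial phi j x).
Proof.
move=> dpsi dphi.
have dpsi_a a := cmx_differentiable_cderivable a 0 (delta_mx 0 j) dpsi.
have dphi_a a := cmx_differentiable_cderivable a 0 (delta_mx 0 j) dphi.
rewrite (_ : (fun y => _) = fun y => \sum_a (psi y a 0)^*%C * phi y a 0); last first.
  by apply/funext => y; rewrite braketE.
rewrite cderive_sum => [|a]; last exact/cderivableM/dphi_a/cderivable_conj.
rewrite !braketE -big_split; apply: eq_bigr => a _.
by rewrite cderiveM ?cderive_conj -?cmx_partialE //; apply: cderivable_conj.
Qed.

Lemma Re_braket_partial_unit (Theta : set 'rV[R]_p) psi j x :
  open Theta -> Theta x -> cmx_differentiable psi x ->
  (forall y, Theta y -> braket (psi y) (psi y) = 1) ->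
  Re (braket (psi x) (cmx_partial psi j x)) = 0.
Proof.
move=> oTheta Tx dpsi unit.
have near_unit : \forall y \near x, braket (psi y) (psi y) = 1.
  by apply: filterS (oTheta _ Tx) => y; apply: unit.
have := cderive_braket j dpsi dpsi; rewrite (cderive_near_cst _ near_unit).
rewrite braketC addrC addcJ => /esym/eqP.
by rewrite mulf_eq0 pnatr_eq0 /= => /eqP [].
Qed.

End StateDerivatives.

Section SLDAlgebra.
Variables (R : rcfType) (d : nat).
Implicit Types u v : 'cV[R[i]]_d.

Lemma sld_mulmx_ket u v (L : 'M[R[i]]_d) :
  braket u u = 1 -> Re (braket u v) = 0 ->
  v *m dagger u + u *m dagger v = (1 / 2 : R[i]) *: (ketbra u *m L + L *m ketbra u) ->
  L *m u = 2%:R *: (v + (braket u v)^*%C *: u).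
Proof.
move=> unit_u Re0 /(congr1 (mulmx^~ u)).
rewrite /ketbra mulmxDl -!scalemxAl mulmxDl -!mulmxA !mulmx_bra_ket unit_u !scale1r.
rewrite [braket v u]braketC; set c := braket u v; set m := braket u (L *m u) => E.
have c_imag : c + c^*%C = 0 by rewrite addcJ Re0 mulr0.
have m0 : m = 0.
  have := congr1 (braket u) E.
  rewrite !braketZr !braketDr !braketZr unit_u !mulr1 -/c -/m c_imag => Em.
  by rewrite Em; field.
move: E; rewrite m0 scale0r add0r => ->.
by rewrite scalerA div1r mulrV ?unitfE ?pnatr_eq0 // scale1r.
Qed.

Lemma Im_braket_shift u vj vk :
  braket u u = 1 -> Re (braket u vj) = 0 -> Re (braket u vk) = 0 ->
  Im (braket (vj + (braket u vj)^*%C *: u) (vk + (braket u vk)^*%C *: u)) =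
  Im (braket vj vk).
Proof.
move=> unit_u.
rewrite !braketDl !braketDr !braketZl !braketZr unit_u [braket vj u]braketC.
case: (braket u vj) => a b /= ->; case: (braket u vk) => a' b' /= ->.
by case: (braket vj vk) => x y; simpc; ring.
Qed.

End SLDAlgebra.

Theorem lemma4p1 (R : realType) (p d : nat) (Theta : set 'rV[R]_p)
    (psi : 'rV[R]_p -> 'cV[R[i]]_d) (theta0 : 'rV[R]_p) :
  open Theta -> Theta theta0 ->
  (forall theta, Theta theta -> cmx_differentiable psi theta) ->
  (forall theta, Theta theta -> braket (psi theta) (psi theta) = 1) ->
  forall lam : 'I_p -> 'M[R[i]]_d,
  (forall j, hermitian_mx (lam j)) ->
  (forall j, cmx_partial (fun theta => ketbra (psi theta)) j theta0 =
     (1 / 2 : R[i]) *: (ketbra (psi theta0) *m lam j + lam j *m ketbra (psi theta0))) ->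
  ((forall j k, complex.Im (braket (lam j *m psi theta0) (lam k *m psi theta0)) = 0)
   <->
   (forall j k, complex.Im (braket (cmx_partial psi j theta0)
                           (cmx_partial psi k theta0)) = 0)).
Proof.
move=> oTheta Theta0 dpsi unit lam _ sld.
set u := psi theta0; set D := cmx_partial psi.
have unit_u : braket u u = 1 by apply: unit.
have Re0 j : Re (braket u (D j theta0)) = 0.
  exact: Re_braket_partial_unit oTheta Theta0 (dpsi _ Theta0) unit.
have lam_u j : lam j *m u = 2%:R *: (D j theta0 + (braket u (D j theta0))^*%C *: u).
  by apply: sld_mulmx_ket => //; rewrite -cmx_partial_ketbra ?sld //; apply: dpsi.
have Im_lam j k :
    Im (braket (lam j *m u) (lam k *m u)) = 4%:R * Im (braket (D j theta0) (D k theta0)).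
  rewrite !lam_u braketZl braketZr conjc_nat mulrA -natrM Im_mulr_nat.
  by rewrite Im_braket_shift.
split=> Im0 j k; have := Im0 j k; rewrite Im_lam.
  by move/eqP; rewrite mulf_eq0 pnatr_eq0 => /eqP.
by move=> ->; rewrite mulr0.
Qed.
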